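(* Let $I\subset\mathbb R$ be a bounded closed non-degenerate interval and $f\in\bigcap_{r\ge1}L^r(I)$. If $f^-\in L^\infty(I)$ or $f^+\in L^\infty(I)$, then $\lim_{r\to+\infty}\tau_r^f=\frac12\big({\rm essinf}_If+{\rm esssup}_If\big)$ (in $\overline{\mathbb R}$).
   Context: For $f\in L^r(I)$ with $r>1$, $\tau_r^f$ denotes the unique real number minimizing $t\mapsto\|f-t\|_{L^r(I)}$. $f^+=\max\{f,0\}$, $f^-=\max\{-f,0\}$. *)

From HB Require Import structures.
From mathcomp Require Import all_boot all_order all_algebra.
From mathcomp Require Import all_classical all_reals all_analysis.
From mathcomp Require Import ess_sup_inf hoelder.
Set Implicit Arguments. Unset Strict Implicit. Unset Printing Implicit Defensive.
Import Order.TTheory GRing.Theory Num.Theory.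
Import numFieldNormedType.Exports.
Local Open Scope classical_set_scope.
Local Open Scope ring_scope.

Definition muI (R : realType) (a b : R) :=
  mrestr (@lebesgue_measure R) (measurable_itv `[a, b]).

Definition LnormI (R : realType) (a b : R) (p : \bar R) (g : R -> R) : \bar R :=
  Lnorm (muI a b) p (EFin \o g).

(* tau_r^f : the (unique) real minimizing t |-> ||f - t||_{L^r(I)};
   chosen with xget among the minimizers. *)
Definition tau (R : realType) (a b : R) (f : R -> R) (r : R) : R :=
  xget 0 [set t : R | forall s : R,
     (LnormI a b r%:E (fun x => (f x - t)%R) <= LnormI a b r%:E (fun x => (f x - s)%R))%E].

Definition fpos (R : realType) (f : R -> R) : R -> R := fun x => Num.max (f x) 0.
Definition fneg (R : realType) (f : R -> R) : R -> R := fun x => Num.max (- f x) 0.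

(* For r >= 1 the L^r distance from g to the constant t is continuous and
   coercive in t, hence has a minimizer (an L^r center); minimizing it is the
   same as minimizing the integral of |g - t|^r, and as r -> +oo this integral
   is dominated by the largest values of |g - t|, which sit near the essential
   extrema on sets of positive measure.
   If m = essinf g and M = esssup g are finite, then |g - (m + M)/2| <= (M - m)/2
   a.e., whereas for a constant t with |t - (m + M)/2| >= e the bound
   |g - t| >= (M - m)/2 + e/2 holds on a set of positive measure, so t cannot be
   a center for large r.  If g >= m a.e. and M = +oo, a constant t <= K loses
   against K + 1: passing to K + 1 costs at most A^r where g is near m, and gains
   (2A + 2)^(r-1) on the set of positive measure where g > K + 2A + 2.  The case
   of g bounded above reduces to this one by replacing g with -g. *)
From HB Require Import structures.
From mathcomp Require Import all_boot all_order all_algebra.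
From mathcomp Require Import all_classical all_reals all_analysis.
From mathcomp Require Import ess_sup_inf hoelder measurable_realfun.
From mathcomp Require Import ring lra.
Import Order.TTheory GRing.Theory Num.Theory.
Import numFieldNormedType.Exports.
Local Open Scope classical_set_scope.
Local Open Scope ring_scope.

Set Implicit Arguments. Unset Strict Implicit. Unset Printing Implicit Defensive.

Lemma powR_mul_lt_eventually {R : realType} (x y a b : R) :
  0 <= x -> x < y -> 0 <= a -> 0 < b ->
  \forall r \near +oo, x `^ r * a < y `^ r * b.
Proof.
move=> x0 xy a0 b0.
have y0 : 0 < y by apply: le_lt_trans xy.
have [->|x_neq0] := eqVneq x 0.
  near=> r; rewrite powR0 ?mul0r; first by rewrite mulr_gt0 // powR_gt0.
  by rewrite gt_eqF //; near: r; apply: nbhs_pinfty_gt; rewrite num_real.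
have xp : 0 < x by rewrite lt_neqAle eq_sym x_neq0 x0.
have [->|a_neq0] := eqVneq a 0.
  by apply: nearW => r; rewrite mulr0 mulr_gt0 // powR_gt0.
have ap : 0 < a by rewrite lt_neqAle eq_sym a_neq0 a0.
set q := ln y - ln x.
have q0 : 0 < q by rewrite subr_gt0 ltr_ln // posrE.
apply: filterS (nbhs_pinfty_gt (num_real (ln (a / b) / q))) => r hr.
have ab_lt : a / b < expR (r * q).
  by rewrite -[X in X < _]lnK ?ltr_expR ?posrE ?divr_gt0 // -ltr_pdivrMr.
rewrite /powR (negbTE x_neq0) gt_eqF //.
have -> : r * ln y = r * ln x + r * q by rewrite /q; ring.
by rewrite expRD -mulrA ltr_pM2l ?expR_gt0 // -ltr_pdivrMr.
Unshelve. all: by end_near. Qed.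

(* Pointwise form of the comparison between the constants t <= K and K + 1
   when y >= K + 1 - A: moving the constant up costs at most A^r, and gains
   at least (2A + 2)^(r-1) where y is far above K. *)
Lemma powR_shift_ineq {R : realType} (y t K A r : R) :
  1 <= r -> t <= K -> K + 1 - A <= y -> 0 <= A ->
  `|y - (K + 1)| `^ r + (if K + 2 * A + 2 < y then (2 * A + 2) `^ (r - 1) else 0)
  <= `|y - t| `^ r + A `^ r.
Proof.
move=> r1 tK yA A0.
have r0 : 0 <= r by apply: le_trans r1.
have r10 : 0 <= r - 1 by rewrite subr_ge0.
have Ar_ge0 := powR_ge0 A r.
case: ifPn => hy.
- have yt_ge0 : 0 <= y - t by lra.
  rewrite (ger0_norm yt_ge0) ger0_norm; last by lra.
  have h1 : (y - (K + 1)) `^ r <= (y - t - 1) `^ r.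
    by apply: ge0_ler_powR; rewrite ?nnegrE //; lra.
  have h2 : (y - t - 1) `^ r = (y - t - 1) * (y - t - 1) `^ (r - 1).
    by rewrite mulr_powRB1 //; lra.
  have h3 : (y - t - 1) * (y - t - 1) `^ (r - 1) <= (y - t - 1) * (y - t) `^ (r - 1).
    by apply: ler_wpM2l; [lra | apply: ge0_ler_powR; rewrite ?nnegrE //; lra].
  have h4 : (2 * A + 2) `^ (r - 1) <= (y - t) `^ (r - 1).
    by apply: ge0_ler_powR; rewrite ?nnegrE //; lra.
  have h5 : (y - t) `^ r = (y - t) * (y - t) `^ (r - 1).
    by rewrite mulr_powRB1 //; lra.
  have h6 : 0 <= (y - t) `^ (r - 1) by apply: powR_ge0.
  nra.
- rewrite addr0; have [yK|yK] := leP (K + 1) y.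
  + have : `|y - (K + 1)| `^ r <= `|y - t| `^ r.
      by apply: ge0_ler_powR; rewrite ?nnegrE // !ger0_norm; lra.
    lra.
  + have : `|y - (K + 1)| `^ r <= A `^ r.
      by apply: ge0_ler_powR; rewrite ?nnegrE // ler0_norm; lra.
    have := powR_ge0 `|y - t| r; lra.
Qed.

Section Lr_centers.
Context {R : realType} {d : measure_display} {T : measurableType d}.
Variable mu : {measure set T -> \bar R}.
Hypotheses (mu_gt0 : (0 < mu setT)%E) (mu_fin : (mu setT < +oo)%E).

Definition rnorm (r : R) (h : T -> R) := Lnorm mu r%:E (EFin \o h).
Definition mass := fine (mu setT).

Lemma massE : mu setT = mass%:E.
Proof. by rewrite fineK // ge0_fin_numE. Qed.

Lemma mass_gt0 : 0 < mass.
Proof. by rewrite -lte_fin -massE. Qed.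

Lemma rnorm_cst r c : 0 < r -> rnorm r (cst c) = (`|c| * mass `^ r^-1)%:E.
Proof.
move=> r0; rewrite /rnorm unlock /= integral_cst // massE -EFinM poweR_EFin
  powRM ?powR_ge0 ?(ltW mass_gt0) // -powRrM mulfV ?gt_eqF // powRr1 //.
Qed.

Lemma measure_lty (E : set T) : measurable E -> (mu E < +oo)%E.
Proof. by move=> mE; apply: le_lt_trans mu_fin; apply: le_measure; rewrite ?inE. Qed.

Lemma measure_fin_num (E : set T) : measurable E -> mu E \is a fin_num.
Proof. by move=> mE; rewrite ge0_fin_numE // measure_lty. Qed.

Variable g : T -> R.
Hypothesis mg : measurable_fun setT g.
Hypothesis gLr : forall r, 1 <= r -> (rnorm r g < +oo)%E.

Definition distc r t := rnorm r (fun x => g x - t).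
Definition Lr_center r t := forall s, (distc r t <= distc r s)%E.

Lemma measurable_subr_cst t : measurable_fun setT (fun x => g x - t).
Proof. exact: measurable_funB. Qed.

Lemma distc_triangle r s t : 1 <= r ->
  (distc r t <= distc r s + (`|s - t| * mass `^ r^-1)%:E)%E.
Proof.
move=> r1; rewrite /distc -rnorm_cst ?(lt_le_trans ltr01 r1) //.
have -> : (fun x => g x - t) = ((fun x => g x - s) \+ cst (s - t))%R.
  by apply/funext => x /=; rewrite addrA subrK.
exact: minkowski_EFin (measurable_subr_cst s) (measurable_cst _) r1.
Qed.

Lemma distc0 r : distc r 0 = rnorm r g.
Proof. by rewrite /distc; congr rnorm; apply/funext => x; rewrite subr0. Qed.

Lemma distc_fin_num r t : 1 <= r -> distc r t \is a fin_num.
Proof.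
move=> r1; rewrite ge0_fin_numE ?Lnorm_ge0 //.
apply: le_lt_trans (distc_triangle 0 t r1) _.
by rewrite distc0 lte_add_pinfty ?gLr // ltry.
Qed.

Lemma distc_coercive r t : 1 <= r ->
  ((`|t| * mass `^ r^-1)%:E <= rnorm r g + distc r t)%E.
Proof.
move=> r1; rewrite -rnorm_cst ?(lt_le_trans ltr01 r1) //.
have -> : distc r t = rnorm r (fun x => - (g x - t)).
  rewrite /distc /rnorm -[in RHS]oppe_Lnorm; congr Lnorm.
  by apply/funext => x /=; rewrite opprK.
have -> : cst t = (g \+ (fun x => - (g x - t)))%R.
  by apply/funext => x /=; rewrite opprB addrC subrK.
exact: minkowski_EFin mg (measurableT_comp _ (measurable_subr_cst t)) r1.
Qed.

Definition distcR r t := fine (distc r t).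

Lemma distcRE r t : 1 <= r -> distc r t = (distcR r t)%:E.
Proof. by move=> r1; rewrite /distcR fineK ?distc_fin_num. Qed.

Lemma continuous_distcR r : 1 <= r -> continuous (distcR r).
Proof.
move=> r1 x; apply/cvgrPdist_lt => e e0.
have k0 : 0 < mass `^ r^-1 by rewrite powR_gt0 // mass_gt0.
have Lip u v : distcR r u <= distcR r v + `|v - u| * mass `^ r^-1.
  by rewrite -lee_fin EFinD -!distcRE //; exact: distc_triangle.
have : \forall y \near x, `|x - y| < e / mass `^ r^-1.
  by apply: (@cvgr_dist_lt _ _ _ (nbhs x) _ id x) => //; rewrite divr_gt0.
apply: filterS => y xy.
have := Lip y x; have := Lip x y; rewrite distrC.
have : `|x - y| * mass `^ r^-1 < e by rewrite -ltr_pdivlMr.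
by rewrite ltr_norml; lra.
Qed.

(* Minimize over [-B, B] by the extreme value theorem; outside that interval
   coercivity makes distc larger than at 0. *)
Lemma exists_Lr_center r : 1 <= r -> exists t, Lr_center r t.
Proof.
move=> r1.
have k0 : 0 < mass `^ r^-1 by rewrite powR_gt0 // mass_gt0.
set B := 2 * fine (rnorm r g) / mass `^ r^-1.
have B0 : 0 <= B.
  by rewrite /B divr_ge0 ?(ltW k0) // mulr_ge0 // fine_ge0 // Lnorm_ge0.
have BB : - B <= B by lra.
have [c cB cmin] := EVT_min BB (continuous_subspaceT (continuous_distcR r1)).
exists c => s; rewrite !distcRE // lee_fin.
have [|sB] := boolP (s \in `[- B, B]); first exact: cmin.
have c0 : distcR r c <= distcR r 0 by apply: cmin; rewrite in_itv /=; lra.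
have g_fin : rnorm r g \is a fin_num by rewrite -distc0 distc_fin_num.
have := distc_coercive s r1.
rewrite distcRE // -(fineK g_fin) -EFinD lee_fin => hs.
have distcR0 : distcR r 0 = fine (rnorm r g) by rewrite /distcR distc0.
have : B < `|s|.
  by rewrite ltNge; apply: contra sB => sB; rewrite in_itv /= -ler_norml.
by rewrite /B ltr_pdivrMr //; lra.
Qed.

Definition Ir r t := (\int[mu]_x (`|g x - t| `^ r)%:E)%E.

Lemma measurable_Ir_integrand r t :
  measurable_fun setT (fun x => (`|g x - t| `^ r)%:E).
Proof.
apply/measurable_EFinP; apply: (measurableT_comp (measurable_powR r)).
exact: measurableT_comp (measurable_subr_cst t).
Qed.

Lemma Ir_ge0 r t : (0 <= Ir r t)%E.
Proof. by apply: integral_ge0 => x _; rewrite lee_fin powR_ge0. Qed.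

Lemma distcE r t : distc r t = (Ir r t `^ r^-1)%E.
Proof. by rewrite /distc /rnorm unlock. Qed.

Lemma Ir_fin_num r t : 1 <= r -> Ir r t \is a fin_num.
Proof.
move=> r1; have r0 : r != 0 by rewrite gt_eqF // (lt_le_trans ltr01 r1).
have : (distc r t `^ r)%E \is a fin_num by rewrite fin_num_poweR // distc_fin_num.
by rewrite /distc /rnorm powR_Lnorm.
Qed.

Lemma Ir_lt_not_Lr_center r s t : 1 <= r -> (Ir r s < Ir r t)%E -> ~ Lr_center r t.
Proof.
move=> r1 st /(_ s); apply/negP; rewrite -ltNge !distcE.
rewrite -(fineK (Ir_fin_num s r1)) -(fineK (Ir_fin_num t r1)) !poweR_EFin lte_fin.
apply: gt0_ltr_powR; rewrite ?invr_gt0 ?(lt_le_trans ltr01 r1) ?nnegrE ?fine_ge0 ?Ir_ge0 //.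
by rewrite -lte_fin !fineK ?Ir_fin_num.
Qed.

Lemma measurable_preimage_itv (i : interval R) : measurable (g @^-1` [set` i]).
Proof. by rewrite -[X in measurable X]setTI; apply: mg => //; exact: measurable_itv. Qed.

Lemma ess_inf_lt_measure_gt0 (u : R) : (ess_inf mu (EFin \o g) < u%:E)%E ->
  (0 < mu (g @^-1` `]-oo, u[))%E.
Proof.
move=> hu; rewrite lt0e measure_ge0 andbT; apply/negP => /eqP h0.
move: hu; apply/negP; rewrite -leNgt; apply/ess_infP.
exists (g @^-1` `]-oo, u[); split => //; first exact: measurable_preimage_itv.
by move=> x /=; rewrite lee_fin in_itv /= leNgt => /negP /negbNE.
Qed.

Lemma ess_sup_gt_measure_gt0 (u : R) : (u%:E < ess_sup mu (EFin \o g))%E ->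
  (0 < mu (g @^-1` `]u, +oo[))%E.
Proof.
move=> hu; rewrite lt0e measure_ge0 andbT; apply/negP => /eqP h0.
move: hu; apply/negP; rewrite -leNgt; apply/ess_supP.
exists (g @^-1` `]u, +oo[); split => //; first exact: measurable_preimage_itv.
by move=> x /=; rewrite lee_fin in_itv /= andbT leNgt => /negP /negbNE.
Qed.

Lemma Ir_ge_on r t (E : set T) (k : R) : measurable E -> 0 <= r -> 0 <= k ->
  (forall x, E x -> k <= `|g x - t|) -> ((k `^ r)%:E * mu E <= Ir r t)%E.
Proof.
move=> mE r0 k0 hk.
have on_E : (\int[mu]_(x in E) (`|g x - t| `^ r)%:E <= Ir r t)%E.
  by apply: ge0_subset_integral => //; exact: measurable_Ir_integrand.
apply: le_trans on_E; rewrite -integral_cst //; apply: ge0_le_integral => //.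
- by move=> x _; rewrite lee_fin powR_ge0.
- exact: measurable_funS (measurable_Ir_integrand r t).
- by move=> x Ex; rewrite lee_fin ge0_ler_powR ?nnegrE ?hk.
Qed.

Lemma Ir_le_ae r t (k : R) : 0 <= r -> (\forall x \ae mu, `|g x - t| <= k) ->
  (Ir r t <= (k `^ r * mass)%:E)%E.
Proof.
move=> r0 hk; rewrite EFinM -massE -integral_cst //.
apply: ae_ge0_le_integral => //; first exact: measurable_Ir_integrand.
  by move=> x _; rewrite lee_fin powR_ge0.
apply: filterS hk => x hx _.
by rewrite lee_fin ge0_ler_powR ?nnegrE //; apply: le_trans hx.
Qed.

Lemma Ir_ge_far_from_mid (m M e eta r t : R) : m <= M -> 0 <= r -> 0 <= e ->
  (eta%:E <= mu (g @^-1` `]-oo, (m + e / 2)%R[))%E ->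
  (eta%:E <= mu (g @^-1` `](M - e / 2)%R, +oo[))%E ->
  e <= `|(m + M) / 2 - t| -> ((((M - m) / 2 + e / 2) `^ r * eta)%:E <= Ir r t)%E.
Proof.
move=> mM r0 e0 etaE1 etaE2; rewrite EFinM.
have k0 : 0 <= (M - m) / 2 + e / 2 by lra.
rewrite ler_normr => /orP[h|h].
- apply: le_trans (Ir_ge_on (measurable_preimage_itv `](M - e / 2), +oo[) r0 k0 _).
    by apply: lee_wpmul2l; rewrite // lee_fin powR_ge0.
  move=> x; rewrite /= in_itv /= andbT => hx.
  by rewrite ler_normr; apply/orP; left; lra.
- apply: le_trans (Ir_ge_on (measurable_preimage_itv `]-oo, (m + e / 2)[) r0 k0 _).
    by apply: lee_wpmul2l; rewrite // lee_fin powR_ge0.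
  move=> x; rewrite /= in_itv /= => hx.
  by rewrite ler_normr; apply/orP; right; lra.
Qed.

Lemma Lr_center_near_mid (m M : R) :
  ess_inf mu (EFin \o g) = m%:E -> ess_sup mu (EFin \o g) = M%:E ->
  forall e, 0 < e -> \forall r \near +oo, forall t, Lr_center r t -> `|(m + M) / 2 - t| < e.
Proof.
move=> hm hM e e0.
have ae_ge_m : \forall x \ae mu, m <= g x.
  by apply: filterS (ess_inf_le mu (EFin \o g)) => x; rewrite hm lee_fin.
have ae_le_M : \forall x \ae mu, g x <= M.
  by apply: filterS (ess_sup_ge mu (EFin \o g)) => x; rewrite hM lee_fin.
have mM : m <= M.
  have PF := ae_properfilter_algebraOfSetsType mu_gt0.
  have [x [h1 h2]] := @filter_ex _ _ PF _
    (filterS2 _ (fun x (a : m <= g x) (b : g x <= M) => conj a b) ae_ge_m ae_le_M).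
  exact: le_trans h1 h2.
pose E1 := g @^-1` `]-oo, m + e / 2[; pose E2 := g @^-1` `]M - e / 2, +oo[.
have E1_gt0 : (0 < mu E1)%E by apply: ess_inf_lt_measure_gt0; rewrite hm lte_fin; lra.
have E2_gt0 : (0 < mu E2)%E by apply: ess_sup_gt_measure_gt0; rewrite hM lte_fin; lra.
have fin_E1 := measure_fin_num (measurable_preimage_itv `]-oo, m + e / 2[).
have fin_E2 := measure_fin_num (measurable_preimage_itv `]M - e / 2, +oo[).
pose eta := Num.min (fine (mu E1)) (fine (mu E2)).
have eta0 : 0 < eta by rewrite lt_min !fine_gt0 ?E1_gt0 ?E2_gt0 -?ge0_fin_numE.
have D0 : 0 <= (M - m) / 2 by rewrite divr_ge0 // subr_ge0.
have De : (M - m) / 2 < (M - m) / 2 + e / 2 by lra.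
apply: filterS2 (nbhs_pinfty_gt (num_real 1))
  (powR_mul_lt_eventually D0 De (ltW mass_gt0) eta0) => r r1 hr t t_center.
rewrite ltNge; apply/negP => far.
have r0 : 0 <= r by apply: le_trans (ltW r1).
apply: (Ir_lt_not_Lr_center (s := (m + M) / 2) (ltW r1) _ t_center).
apply: le_lt_trans (Ir_le_ae (k := (M - m) / 2) r0 _) _.
  by apply: filterS2 ae_ge_m ae_le_M => x h1 h2; rewrite ler_norml; lra.
apply: lt_le_trans (Ir_ge_far_from_mid (eta := eta) mM r0 (ltW e0) _ _ far); rewrite ?lte_fin //.
- by rewrite -(fineK fin_E1) lee_fin ge_min lexx.
- by rewrite -(fineK fin_E2) lee_fin ge_min lexx orbT.
Qed.

Lemma Ir_shift_le r t K A : 1 <= r -> t <= K -> 0 <= A ->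
  (\forall x \ae mu, K + 1 - A <= g x) ->
  (Ir r (K + 1) + ((2 * A + 2) `^ (r - 1))%:E * mu (g @^-1` `](K + 2 * A + 2)%R, +oo[)
   <= Ir r t + (A `^ r)%:E * mu setT)%E.
Proof.
move=> r1 tK A0 ae_lb.
set E := g @^-1` `]K + 2 * A + 2, +oo[; set C := (2 * A + 2) `^ (r - 1).
have mE : measurable E := measurable_preimage_itv _.
have C0 : 0 <= C by apply: powR_ge0.
have m_indic : measurable_fun setT (fun x => (\1_E x)%:E : \bar R).
  by apply/measurable_EFinP; exact: measurable_indic.
have m_ind := emeasurable_funM (measurable_cst C%:E) m_indic.
have m_lhs := emeasurable_funD (measurable_Ir_integrand r (K + 1)) m_ind.
have m_rhs := emeasurable_funD (measurable_Ir_integrand r t) (measurable_cst (A `^ r)%:E).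
have pow_ge0 u v : (0 <= (`|g u - v| `^ r)%:E)%E by rewrite lee_fin powR_ge0.
have ind_ge0 u : (0 <= C%:E * (\1_E u)%:E)%E by rewrite -EFinM lee_fin mulr_ge0.
have lhsE : (\int[mu]_x ((`|g x - (K + 1)| `^ r)%:E + C%:E * (\1_E x)%:E) =
    Ir r (K + 1) + C%:E * mu E)%E.
  rewrite ge0_integralD ?ge0_integralZl_EFin ?integral_indic ?setIT //.
  exact: measurable_Ir_integrand.
have rhsE : (\int[mu]_x ((`|g x - t| `^ r)%:E + (A `^ r)%:E) =
    Ir r t + (A `^ r)%:E * mu setT)%E.
  rewrite ge0_integralD ?integral_cst //; first exact: measurable_Ir_integrand.
  by move=> x _; rewrite lee_fin powR_ge0.
rewrite -lhsE -rhsE; apply: ae_ge0_le_integral => //.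
- by move=> x _; rewrite adde_ge0.
- by move=> x _; rewrite adde_ge0 // lee_fin powR_ge0.
apply: filterS ae_lb => x hx _; rewrite -EFinM -!EFinD lee_fin.
apply: le_trans (powR_shift_ineq r1 tK hx A0); rewrite lerD2l indicE.
have [xE|_] := boolP (x \in E); last by rewrite mulr0; case: ifP => // _; exact: powR_ge0.
by move: xE; rewrite mulr1 inE /E /= in_itv /= andbT => ->.
Qed.

Lemma Lr_center_eventually_gt (m : R) : (\forall x \ae mu, m <= g x) ->
  ess_sup mu (EFin \o g) = +oo%E ->
  forall K, \forall r \near +oo, forall t, Lr_center r t -> K < t.
Proof.
move=> ae_lb hM K.
pose A := K + 1 - Num.min m K.
have A0 : 0 <= A by rewrite /A subr_ge0 ge_min lerDl ler01 orbT.
have ae_lb' : \forall x \ae mu, K + 1 - A <= g x.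
  by apply: filterS ae_lb => x hx; rewrite /A opprB addrC subrK ge_min hx.
set E := g @^-1` `]K + 2 * A + 2, +oo[.
have E_gt0 : (0 < mu E)%E by apply: ess_sup_gt_measure_gt0; rewrite hM ltry.
have fin_E := measure_fin_num (measurable_preimage_itv `]K + 2 * A + 2, +oo[).
pose eta := fine (mu E).
have eta0 : 0 < eta by rewrite fine_gt0 // E_gt0 -ge0_fin_numE.
have b0 : 0 < eta / (2 * A + 2) by rewrite divr_gt0 //; lra.
have AA : A < 2 * A + 2 by lra.
apply: filterS2 (nbhs_pinfty_gt (num_real 1))
  (powR_mul_lt_eventually A0 AA (ltW mass_gt0) b0) => r r1 hr t t_center.
rewrite ltNge; apply/negP => tK.
apply: (Ir_lt_not_Lr_center (s := K + 1) (ltW r1) _ t_center).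
have := Ir_shift_le (ltW r1) tK A0 ae_lb'.
have -> : (2 * A + 2) `^ (r - 1) = (2 * A + 2) `^ r / (2 * A + 2).
  by rewrite powRB ?powRr1 //; [lra | apply/implyP => _; rewrite gt_eqF //; lra].
rewrite -(fineK (Ir_fin_num (K + 1) (ltW r1))) -(fineK (Ir_fin_num t (ltW r1))).
rewrite -(fineK fin_E) massE -!EFinM -!EFinD !lee_fin lte_fin -/eta.
by rewrite mulrAC -mulrA in hr *; lra.
Qed.

Lemma ess_inf_neq_pinfty : ess_inf mu (EFin \o g) != +oo%E.
Proof.
apply/eqP => /ess_inf_eqyP h.
by have [] := @filter_ex _ _ (ae_properfilter_algebraOfSetsType mu_gt0) _ h.
Qed.

Lemma ess_sup_neq_ninfty : ess_sup mu (EFin \o g) != -oo%E.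
Proof.
apply/eqP => /ess_sup_eqNyP h.
by have [] := @filter_ex _ _ (ae_properfilter_algebraOfSetsType mu_gt0) _ h.
Qed.

Lemma Lr_center_cvg_lbounded (c : R -> R) (m : R) :
  (forall r, 1 <= r -> Lr_center r (c r)) -> (\forall x \ae mu, m <= g x) ->
  (c r)%:E @[r --> +oo] -->
    ((ess_inf mu (EFin \o g) + ess_sup mu (EFin \o g)) * (2^-1)%:E)%E.
Proof.
move=> c_center ae_lb.
have inf_ge : (m%:E <= ess_inf mu (EFin \o g))%E.
  by apply/ess_infP; apply: filterS ae_lb => x; rewrite lee_fin.
have r1near := nbhs_pinfty_gt (num_real (1 : R)).
move: inf_ge ess_inf_neq_pinfty; case Hm : ess_inf => [m'| |] // _ _.
move: ess_sup_neq_ninfty; case Hs : ess_sup => [M| |] // _.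
- rewrite -EFinD -EFinM; apply: cvg_EFin; first exact: nearW.
  apply/cvgrPdist_lt => e e0.
  apply: filterS2 r1near (Lr_center_near_mid Hm Hs e0) => r r1 H.
  exact: H _ (c_center r (ltW r1)).
- rewrite addey // gt0_mulye ?lte_fin ?invr_gt0 //.
  apply/cvgeyPgt => K.
  apply: filterS2 r1near (Lr_center_eventually_gt ae_lb Hs K) => r r1 H.
  by rewrite lte_fin; exact: H _ (c_center r (ltW r1)).
Qed.

End Lr_centers.

Section Lr_centers_opp.
Context {R : realType} {d : measure_display} {T : measurableType d}.
Variable mu : {measure set T -> \bar R}.

Lemma distc_opp (g : T -> R) r t : distc mu (fun x => - g x) r t = distc mu g r (- t).
Proof.
rewrite /distc /rnorm -[RHS]oppe_Lnorm; congr Lnorm; apply/funext => x /=.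
by congr EFin; ring.
Qed.

Theorem Lr_center_cvg (g : T -> R) (c : R -> R) :
  (0 < mu setT)%E -> (mu setT < +oo)%E -> measurable_fun setT g ->
  (forall r, 1 <= r -> (rnorm mu r g < +oo)%E) ->
  (forall r, 1 <= r -> Lr_center mu g r (c r)) ->
  (exists m, \forall x \ae mu, m <= g x) \/ (exists M, \forall x \ae mu, g x <= M) ->
  (c r)%:E @[r --> +oo] -->
    ((ess_inf mu (EFin \o g) + ess_sup mu (EFin \o g)) * (2^-1)%:E)%E.
Proof.
move=> mu_gt0 mu_fin mg gLr c_center [[m ae_lb]|[M ae_ub]].
  exact: Lr_center_cvg_lbounded c_center ae_lb.
pose g' x := - g x.
have g'E : EFin \o g' = (\- (EFin \o g))%E by apply/funext.
have cvg' : (- c r)%:E @[r --> +oo] -->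
    ((ess_inf mu (EFin \o g') + ess_sup mu (EFin \o g')) * (2^-1)%:E)%E.
  apply: (Lr_center_cvg_lbounded mu_gt0 mu_fin (measurable_funN mg) _ _ (m := - M)).
  - by move=> r r1; rewrite /rnorm g'E oppe_Lnorm; exact: gLr.
  - by move=> r r1 s; rewrite !distc_opp opprK; exact: c_center.
  - by apply: filterS ae_ub => x; rewrite /g' lerN2.
have -> : (fun r => (c r)%:E) = (fun r => - (- c r)%:E)%E.
  by apply/funext => r; rewrite EFinN oppeK.
rewrite g'E ess_infN ess_supN addeC -oppeD ?mulNe in cvg'.
  by rewrite -[X in _ --> X]oppeK; exact: cvgeN cvg'.
have sup_le : (ess_sup mu (EFin \o g) <= M%:E)%E.
  by apply/ess_supP; apply: filterS ae_ub => x; rewrite lee_fin.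
have sup_neq_pinfty : ess_sup mu (EFin \o g) != +oo%E.
  by apply: contraTneq sup_le => ->; rewrite leye_eq.
by rewrite /adde_def (negbTE (ess_inf_neq_pinfty mu_gt0 g)) (negbTE sup_neq_pinfty) !andbF.
Qed.

End Lr_centers_opp.

Section mrestr_patch.
Import HBNNSimple.
Context {d : measure_display} {T : measurableType d} {R : realType}.
Variables (mu : {measure set T -> \bar R}) (D : set T) (mD : measurable D).

Lemma mrestr_setC : mrestr mu mD (~` D) = 0%E.
Proof. by rewrite /mrestr setICl measure0. Qed.

Lemma sintegral_mrestr_proj (h : {nnsfun T >-> R}) :
  sintegral (mrestr mu mD) (proj_nnsfun h mD) = sintegral (mrestr mu mD) h.
Proof.
rewrite -!integralT_nnsfun.
transitivity (\int[mrestr mu mD]_(x in D) (h x)%:E)%E.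
  rewrite [RHS]integral_mkcond; apply: eq_integral => x _.
  by rewrite -mrestrict !patchE; case: ifPn.
have := @ge0_negligible_integral _ _ _ (mrestr mu mD) setT (~` D) (EFin \o h)
  (measurableC mD) measurableT _ _ mrestr_setC.
rewrite setTD setCK => <- //; first exact/measurable_EFinP.
by move=> x _; rewrite lee_fin.
Qed.

(* No measurability of F is needed: both sides are suprema of integrals of
   simple functions, and projecting a simple function on D does not change
   its integral for the restricted measure. *)
Lemma ge0_integral_mrestr_patch (F : T -> \bar R) : (forall x, 0 <= F x)%E ->
  (\int[mrestr mu mD]_x F x = \int[mrestr mu mD]_x (F \_ D) x)%E.
Proof.
move=> F0.
have FD0 x : (0 <= (F \_ D) x)%E by rewrite patchE; case: ifPn.
rewrite !ge0_integralTE //=; apply/eqP; rewrite eq_le; apply/andP; split.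
- apply: ge_ereal_sup => _ [h /= hF <-].
  apply: ereal_sup_ubound; exists (proj_nnsfun h mD); last exact: sintegral_mrestr_proj.
  by move=> x /=; rewrite mindicE !patchE; case: ifPn => _; rewrite ?mulr1 ?mulr0.
- apply: ereal_sup_le => _ [h /= hF <-]; exists h => //= x.
  by apply: le_trans (hF x) _; rewrite patchE; case: ifPn.
Qed.

Lemma Lnorm_mrestr_patch (r : R) (h : T -> R) : 0 < r ->
  Lnorm (mrestr mu mD) r%:E (EFin \o h) = Lnorm (mrestr mu mD) r%:E (EFin \o (h \_ D)).
Proof.
move=> r0; rewrite unlock; congr poweR.
rewrite ge0_integral_mrestr_patch; last by move=> x; apply: poweR_ge0.
apply: eq_integral => x _; rewrite /= !patchE; case: ifPn => //= _.
by rewrite normr0 powR0 // gt_eqF.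
Qed.

Lemma ae_mrestr_patch (h : T -> R) : \forall x \ae mrestr mu mD, h x = (h \_ D) x.
Proof.
exists (~` D); split; [exact: measurableC | exact: mrestr_setC |].
by move=> x /= hx Dx; apply: hx; rewrite patchE mem_set.
Qed.

End mrestr_patch.

Lemma ess_bounded_finite_norm_infty {d : measure_display} {T : measurableType d}
    {R : realType} (mu : {measure set T -> \bar R}) (h : T -> R) :
  (0 < mu setT)%E -> finite_norm mu +oo%E h ->
  exists C : R, \forall x \ae mu, `|h x| <= C.
Proof.
move=> mu_gt0; rewrite /finite_norm unlock mu_gt0.
have C_ub : (ess_sup mu (abse \o (EFin \o h)) < +oo)%E ->
    exists C : R, (ess_sup mu (abse \o (EFin \o h)) <= C%:E)%E.
  by case: ess_sup => [C _|//|_]; [exists C | exists 0; rewrite leNye].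
move=> /C_ub[C hC]; exists C.
apply: filterS (ess_sup_ge mu (abse \o (EFin \o h))) => x hx.
by rewrite -lee_fin -abse_EFin; apply: le_trans hC.
Qed.

Lemma muI_setT (R : realType) (a b : R) : a < b -> muI a b setT = (b - a)%:E.
Proof.
by move=> ab; rewrite /muI /mrestr setTI lebesgue_measure_itv /= lte_fin ab EFinB.
Qed.

Lemma LnormI_distc (R : realType) (a b r t : R) (f : R -> R) : 0 < r ->
  LnormI a b r%:E (fun x => f x - t) = distc (muI a b) (f \_ [set` `[a, b]]) r t.
Proof.
move=> r0; rewrite /LnormI /distc /rnorm Lnorm_mrestr_patch // [RHS]Lnorm_mrestr_patch //.
by congr Lnorm; apply/funext => x /=; rewrite !patchE; case: ifPn.
Qed.

Lemma tau_Lr_center (R : realType) (a b r : R) (f : R -> R) : 1 <= r ->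
  (exists t, Lr_center (muI a b) (f \_ [set` `[a, b]]) r t) ->
  Lr_center (muI a b) (f \_ [set` `[a, b]]) r (tau a b f r).
Proof.
move=> r1 ex_center; rewrite /tau; set P := (X in xget 0 X).
have r0 : 0 < r := lt_le_trans ltr01 r1.
have -> : P = [set t | Lr_center (muI a b) (f \_ [set` `[a, b]]) r t].
  by apply/seteqP; split => t /= H s; have := H s; rewrite !LnormI_distc.
exact: xgetPex ex_center.
Qed.

Theorem theorem4 (R : realType) (a b : R) (f : R -> R) :
  a < b ->
  measurable_fun `[a, b] f ->
  (forall r : R, 1 <= r -> finite_norm (muI a b) r%:E f) ->
  (finite_norm (muI a b) +oo%E (fneg f) \/ finite_norm (muI a b) +oo%E (fpos f)) ->
  (tau a b f r)%:E @[r --> +oo] -->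
    ((ess_inf (muI a b) (EFin \o f) + ess_sup (muI a b) (EFin \o f))
       * (2^-1)%:E)%E.
Proof.
move=> ab mf fLr f_bnd.
pose g := f \_ [set` `[a, b]].
have mg : measurable_fun setT g by apply/(measurable_restrictT f (measurable_itv _)).
have mu_gt0 : (0 < muI a b setT)%E by rewrite muI_setT // lte_fin subr_gt0.
have mu_fin : (muI a b setT < +oo)%E by rewrite muI_setT // ltry.
have gLr r : 1 <= r -> (rnorm (muI a b) r g < +oo)%E.
  move=> r1; have := fLr r r1.
  by rewrite /finite_norm /rnorm /muI Lnorm_mrestr_patch // (lt_le_trans ltr01 r1).
have ae_patch (h : R -> R) : \forall x \ae muI a b, h x = (h \_ [set` `[a, b]]) x.
  exact: ae_mrestr_patch.
have ae_fg : \forall x \ae muI a b, (EFin \o f) x = (EFin \o g) x.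
  by apply: (@filterS _ _ (ae_filter_ringOfSetsType _) _ _ _ (ae_patch f)) => x /= ->.
rewrite (eq_ess_inf ae_fg) (eq_ess_sup ae_fg).
apply: (Lr_center_cvg mu_gt0 mu_fin mg gLr).
  by move=> r r1; apply: tau_Lr_center r1 (exists_Lr_center mu_gt0 mu_fin mg gLr r1).
case: f_bnd => /(ess_bounded_finite_norm_infty mu_gt0)[C hC]; [left; exists (- C) | right; exists C].
- apply: (@filterS2 _ _ (ae_filter_ringOfSetsType _) _ _ _ _ (ae_patch f) hC) => x.
  rewrite /g => <- /(le_trans (ler_norm _)).
  by rewrite /fneg ge_max => /andP[+ _]; rewrite lerNl.
- apply: (@filterS2 _ _ (ae_filter_ringOfSetsType _) _ _ _ _ (ae_patch f) hC) => x.
  rewrite /g => <- /(le_trans (ler_norm _)).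
  by rewrite /fpos ge_max => /andP[].
Qed.
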